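(* Let $F$ be a field, $t\ge 1$, and let $e_1,\dots,e_t\in M_n(F)$ be nonzero pairwise orthogonal idempotents ($e_ie_j=0$ for $i\ne j$, $e_i^2=e_i$) with $e_1+\cdots+e_t=I_n$; let $n_i=\mathrm{rank}(e_i)$. Let $\sigma_1,\dots,\sigma_t\in F$ be such that $\sum_{i=1}^t\sigma_ik_i\ne 0$ in $F$ for every integer $t$-tuple $(k_1,\dots,k_t)\ne\vec 0$ with $0\le k_i\le n_i$ for all $i$. Then $$V=\Big\{a\in M_n(F):\ e_iae_j=0 \text{ for all } 1\le i<j\le t,\ \ \sum_{i=1}^t\sigma_i\,\mathrm{Tr}(e_iae_i)=0\Big\}$$ (the matrices which are block lower triangular with respect to $e_1,\dots,e_t$ and whose diagonal blocks $a_{ii}=e_iae_i$ satisfy $\sum_i\sigma_i\mathrm{Tr}(a_{ii})=0$) is a Mathieu subspace of $M_n(F)$.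
   Context: Let $\mathcal A$ be an associative algebra over a field $F$. An $F$-subspace $M\subseteq\mathcal A$ is a Mathieu subspace (MS) of $\mathcal A$ if for all $a,b,c\in\mathcal A$ such that $a^m\in M$ for all $m\ge 1$, there exists $N$ (depending on $a,b,c$) such that $ba^mc\in M$ for all $m\ge N$. *)

From mathcomp Require Import all_boot all_order all_algebra.
Set Implicit Arguments. Unset Strict Implicit. Unset Printing Implicit Defensive.
Import GRing.Theory.
Local Open Scope ring_scope.

Definition is_Fsubspace (F : fieldType) (n : nat) (M : 'M[F]_n -> Prop) :=
  M 0 /\ (forall (k : F) (x y : 'M[F]_n), M x -> M y -> M (k *: x + y)).

Definition mathieu_subspace (F : fieldType) (n : nat) (M : 'M[F]_n -> Prop) :=
  is_Fsubspace M /\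
  (forall a b c : 'M[F]_n, (forall m : nat, (1 <= m)%N -> M (a ^+ m)) ->
     exists N : nat, forall m : nat, (N <= m)%N -> M (b * a ^+ m * c)).

(* A subspace V of M_n(F) containing no nonzero idempotent is a Mathieu subspace:
   if all positive powers of a lie in V, so does the Fitting idempotent P of a
   (the projection onto the sum of generalised eigenspaces of nonzero
   eigenvalues), which is a polynomial in a without constant term; hence P = 0
   and a is nilpotent, so b a^m c = 0 for large m.
   For the block lower triangular V of the theorem, the diagonal blocks of an
   idempotent P in V are idempotents, so their traces are their ranks
   k_i <= n_i; the trace condition and the hypothesis on sigma force every
   k_i = 0, and a block lower triangular matrix with zero diagonal blocks is
   nilpotent. *)

From mathcomp Require Import all_boot all_order all_algebra.
Set Implicit Arguments. Unset Strict Implicit. Unset Printing Implicit Defensive.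
Import GRing.Theory.
Local Open Scope ring_scope.

(* With a rank factorisation Q = C R, the identity C R C R = C R and the
   one-sided invertibility of C and R force R C = 1. *)
Lemma mxtrace_idem (F : fieldType) m (Q : 'M[F]_m) :
  Q *m Q = Q -> \tr Q = (\rank Q)%:R.
Proof.
move=> QQ.
have [D DC] := row_fullP (col_base_full Q).
have [B RB] := row_freeP (row_base_free Q).
have QE : col_base Q *m row_base Q = Q by exact: mulmx_base.
move: (col_base Q) (row_base Q) DC RB QE => C R DC RB QE.
have RC : R *m C = 1%:M.
  have h : C *m (R *m C) *m R = C *m 1%:M *m R.
    by rewrite mulmx1 !mulmxA QE -mulmxA QE QQ.
  move: (congr1 (fun X => D *m X *m B) h) => /=.
  by rewrite !mulmxA DC !mul1mx -!mulmxA RB !mulmx1.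
by rewrite -{1}QE mxtrace_mulC RC mxtrace1.
Qed.

Lemma idem_nilpotent_eq0 (R : pzRingType) (x : R) m :
  x * x = x -> x ^+ m = 0 -> x = 0.
Proof.
move=> xx xm0.
have xS : forall k, x ^+ k.+1 = x by elim=> [|k IH]; rewrite ?expr1 // exprS IH.
by rewrite -(xS m) exprSr xm0 mul0r.
Qed.

Section BlockLowerTriangular.

Variables (F : fieldType) (n t : nat) (e : 'I_t -> 'M[F]_n).
Hypothesis e_idem : forall i, e i *m e i = e i.
Hypothesis e_orth : forall i j, i != j -> e i *m e j = 0.
Hypothesis e_sum : \sum_i e i = 1%:M.

Definition block_lower (a : 'M[F]_n) :=
  forall i j : 'I_t, (i < j)%N -> e i *m a *m e j = 0.

Lemma mulmx_sum_idem (X Y : 'M[F]_n) : X *m Y = \sum_k X *m e k *m (e k *m Y).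
Proof.
rewrite -{1}(mulmx1 X) -e_sum mulmx_sumr mulmx_suml; apply: eq_bigr => k _.
by rewrite !mulmxA -(mulmxA X (e k) (e k)) e_idem.
Qed.

Lemma block_lower_diag_idem (P : 'M[F]_n) i :
  block_lower P -> P *m P = P ->
  (e i *m P *m e i) *m (e i *m P *m e i) = e i *m P *m e i.
Proof.
move=> lowP PP.
have PPe : e i *m P *m e i = e i *m P *m (P *m e i).
  by rewrite mulmxA -(mulmxA (e i) P P) PP.
symmetry; rewrite {1}PPe (mulmx_sum_idem (e i *m P)) (bigD1 i) //= big1 ?addr0.
  by rewrite !mulmxA.
move=> j ji; have [ij | ji'] := ltnP i j; first by rewrite lowP // mul0mx.
have lt_ji : (j < i)%N by rewrite ltn_neqAle ji' andbT.
by rewrite (mulmxA (e j) P) (lowP _ _ lt_ji) mulmx0.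
Qed.

Section ZeroDiagonal.

Variable P : 'M[F]_n.
Hypotheses (lowP : block_lower P) (diagP : forall i, e i *m P *m e i = 0).

Lemma block_lower_diag0_exp m (i j : 'I_t) :
  (i < j + m)%N -> e i *m P ^+ m *m e j = 0.
Proof.
elim: m i j => [|m IH] i j lt_ij.
  by rewrite addn0 in lt_ij; rewrite expr0 mulmx1 e_orth // neq_ltn lt_ij.
have -> : e i *m P ^+ m.+1 *m e j = e i *m P *m (P ^+ m *m e j).
  by rewrite exprS mulmxE !mulrA.
rewrite mulmx_sum_idem big1 // => k _.
have [le_ik | lt_ki] := leqP i k.
  have [<- | ne_ik] := eqVneq i k; first by rewrite diagP mul0mx.
  by rewrite lowP ?mul0mx // ltn_neqAle ne_ik.
rewrite (mulmxA (e k)) IH ?mulmx0 //.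
by rewrite addnS ltnS in lt_ij; exact: leq_trans lt_ki lt_ij.
Qed.

Lemma block_lower_diag0_nilpotent : P ^+ t = 0.
Proof.
rewrite -(mulmx1 (P ^+ t)) -(mul1mx (_ *m _)) -e_sum mulmx_suml big1 // => i _.
rewrite !mulmx_sumr big1 // => j _; rewrite mulmxA block_lower_diag0_exp //.
exact: leq_trans (ltn_ord i) (leq_addl _ _).
Qed.

End ZeroDiagonal.

Variable sigma : 'I_t -> F.

Definition V (a : 'M[F]_n) : Prop :=
  block_lower a /\ \sum_(i < t) sigma i * \tr (e i *m a *m e i) = 0.

Lemma V_Fsubspace : is_Fsubspace V.
Proof.
split.
  split=> [i j _|]; first by rewrite mulmx0 mul0mx.
  by rewrite big1 // => i _; rewrite mulmx0 mul0mx mxtrace0 mulr0.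
move=> k x y [lowx trx] [lowy try]; split=> [i j ij|].
  by rewrite mulmxDr mulmxDl -scalemxAr -scalemxAl lowx // lowy // scaler0 addr0.
under eq_bigr => i _ do
  rewrite mulmxDr mulmxDl -scalemxAr -scalemxAl mxtraceD mxtraceZ mulrDr mulrCA.
by rewrite big_split /= -mulr_sumr trx try mulr0 addr0.
Qed.

Hypothesis sigma_rank : forall k : 'I_t -> nat,
  (exists i, k i != 0%N) -> (forall i, (k i <= \rank (e i))%N) ->
  \sum_(i < t) sigma i * (k i)%:R != 0.

Lemma V_idem_eq0 (P : 'M[F]_n) : V P -> P * P = P -> P = 0.
Proof.
move=> [lowP trP] PP.
pose k i := \rank (e i *m P *m e i).
have k0 i : k i = 0%N.
  apply/eqP; move: i; apply/forallP/negPn/negP => /forallPn kn0.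
  have le_k i : (k i <= \rank (e i))%N.
    exact: leq_trans (mxrankM_maxl _ _) (mxrankM_maxl _ _).
  have /negP := sigma_rank kn0 le_k; apply; rewrite -[X in _ == X]trP.
  by apply/eqP/eq_bigr => i _; rewrite mxtrace_idem // block_lower_diag_idem.
have diagP i : e i *m P *m e i = 0 by apply/eqP; rewrite -mxrank_eq0 -/(k i) k0.
exact: idem_nilpotent_eq0 PP (block_lower_diag0_nilpotent lowP diagP).
Qed.

End BlockLowerTriangular.

(* Bezout for X^(k+1) and the cofactor g of X^k in the characteristic
   polynomial gives u X^(k+1) + v g = 1; P := u(a) a^(k+1) is the Fitting
   idempotent, and a^(k+1) (1 - P) = a^(k+1) v(a) g(a) = 0 by Cayley-Hamilton. *)
Lemma Fitting_idempotent (F : fieldType) n (a : 'M[F]_n.+1) :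
  exists (p : {poly F}) (N : nat), [/\ p`_0 = 0,
    horner_mx a p * horner_mx a p = horner_mx a p &
    a ^+ N * horner_mx a p = a ^+ N].
Proof.
have chi_nz : char_poly a != 0 by apply: monic_neq0; exact: char_poly_monic.
have [k [g]] := multiplicity_XsubC (char_poly a) 0.
rewrite chi_nz /= polyC0 subr0 => g0 chiE.
have cop : coprimep 'X^(k.+1) g.
  by apply: coprimep_expl; rewrite coprimep_sym coprimepX.
have [[u v] /= uv1] := Bezout_eq1_coprimepP _ _ cop.
have Xg0 : horner_mx a ('X^(k.+1) * g) = 0.
  by rewrite exprS -mulrA [_ ^+ k * g]mulrC -chiE rmorphM /= Cayley_Hamilton mulr0.
set p := u * 'X^(k.+1).
exists p, k.+1; split.
- by rewrite coefMXn.
- have vg : v * g = 1 - p by rewrite -uv1 addrC addKr.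
  have : horner_mx a (p * (v * g)) = 0 by rewrite mulrACA rmorphM /= Xg0 mulr0.
  rewrite vg mulrBr mulr1 rmorphB /= (rmorphM _ p p) => /eqP.
  by rewrite subr_eq0 => /eqP.
- have -> : a ^+ k.+1 = horner_mx a 'X^(k.+1) by rewrite rmorphXn /= horner_mx_X.
  rewrite -rmorphM /= -[in RHS](mulr1 'X^(k.+1)) -uv1 mulrDr rmorphD /=.
  by rewrite (mulrCA _ v g) (rmorphM _ v) /= Xg0 mulr0 addr0.
Qed.

Lemma Fsubspace_horner_mx (F : fieldType) n (M : 'M[F]_n.+1 -> Prop)
    (a : 'M[F]_n.+1) (p : {poly F}) :
  is_Fsubspace M -> (forall m, (1 <= m)%N -> M (a ^+ m)) -> p`_0 = 0 ->
  M (horner_mx a p).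
Proof.
move=> [M0 Mlin] Ma p0.
rewrite -(coefK p) poly_def linear_sum /=.
apply: (big_ind M) => // [x y Mx My | i _]; first by rewrite -(scale1r x); exact: Mlin.
rewrite linearZ /= rmorphXn /= horner_mx_X.
have [-> | i_gt0] := posnP i; first by rewrite p0 scale0r.
by rewrite -(addr0 (_ *: _)); apply: Mlin => //; apply: Ma.
Qed.

Lemma nilpotent_of_powers_in (F : fieldType) n (M : 'M[F]_n -> Prop) (a : 'M[F]_n) :
  is_Fsubspace M -> (forall P, M P -> P * P = P -> P = 0) ->
  (forall m, (1 <= m)%N -> M (a ^+ m)) -> exists N, a ^+ N = 0.
Proof.
case: n M a => [|n] M a subM idem0 Ma.
  by exists 1%N; rewrite expr1; apply/matrixP => -[].
have [p [N [p0 PP aNP]]] := Fitting_idempotent a.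
exists N; rewrite -aNP (idem0 (horner_mx a p)) ?mulr0 //.
exact: Fsubspace_horner_mx.
Qed.

Lemma mathieu_subspace_of_idem_free (F : fieldType) n (M : 'M[F]_n -> Prop) :
  is_Fsubspace M -> (forall P, M P -> P * P = P -> P = 0) -> mathieu_subspace M.
Proof.
move=> subM idem0; split=> // a b c Ma.
have [N aN0] := nilpotent_of_powers_in subM idem0 Ma.
exists N => m le_Nm.
by rewrite -(subnK le_Nm) exprD aN0 !mulr0 mul0r; exact: subM.1.
Qed.

Theorem mainTheorem2 (F : fieldType) (n t : nat) (e : 'I_t -> 'M[F]_n)
  (sigma : 'I_t -> F)
  (ht : (1 <= t)%N)
  (e_nz : forall i, e i != 0)
  (e_idem : forall i, e i *m e i = e i)
  (e_orth : forall i j, i != j -> e i *m e j = 0)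
  (e_sum : \sum_(i < t) e i = 1%:M)
  (hsigma : forall k : 'I_t -> nat,
     (exists i, k i != 0%N) ->
     (forall i, (k i <= \rank (e i))%N) ->
     \sum_(i < t) sigma i * (k i)%:R != 0) :
  mathieu_subspace
    (fun a : 'M[F]_n =>
       (forall i j : 'I_t, (i < j)%N -> e i *m a *m e j = 0) /\
       \sum_(i < t) sigma i * \tr (e i *m a *m e i) = 0).
Proof.
apply: (@mathieu_subspace_of_idem_free _ _ (V e sigma) (V_Fsubspace e sigma)).
move=> P; exact: (V_idem_eq0 e_idem e_orth e_sum hsigma).
Qed.
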